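(* Let $P$ be the uniform distribution on $[0,1]$ and $\beta=\{\frac14,\frac12\}$. The conditional optimal set of two-points for $P$ with respect to $\beta$ is $\beta$, and $V_2=\frac{37}{768}$ ($\approx0.0481771$).
   Context: For a Borel probability measure $P$ on $\mathbb{R}$ and finite $\beta$ with $\mathrm{card}(\beta)=r$, for $n\ge r$, $V_n=\inf\{\int\min_{a\in\alpha\cup\beta}(x-a)^2dP(x):\mathrm{card}(\alpha)\le n-r\}$; a set $\alpha\cup\beta$ attaining the infimum, with each point of $\beta$ having a Voronoi region of positive $P$-measure, is a conditional optimal set of $n$-points with respect to $\beta$. *)

From HB Require Import structures.
From mathcomp Require Import all_boot all_order all_algebra finmap.
From mathcomp Require Import all_classical all_reals all_analysis.
Set Implicit Arguments. Unset Strict Implicit. Unset Printing Implicit Defensive.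
Import Order.TTheory GRing.Theory Num.Theory.
Local Open Scope classical_set_scope.
Local Open Scope ring_scope.

Section CondQuant.
Variable R : realType.
Variable P : {measure set (measurableTypeR R) -> \bar R}.

Definition distortion (S : {fset R}) : \bar R :=
  (\int[P]_x (\big[Order.min/+oo%E]_(a <- S) ((x - a) ^+ 2)%:E))%E.

Definition condV (beta : {fset R}) (n : nat) : \bar R :=
  ereal_inf [set distortion (alpha `|` beta)%fset |
              alpha in [set alpha : {fset R} | (#|` alpha| <= n - #|` beta|)%N]].

Definition voronoi (S : {fset R}) (a : R) : set R :=
  [set x | forall b, b \in S -> `|x - a| <= `|x - b|].

Definition cond_optimal_set (beta : {fset R}) (n : nat) (gamma : {fset R}) : Prop :=
  (#|` beta| <= n)%N /\
  exists alpha : {fset R},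
    [/\ (#|` alpha| <= n - #|` beta|)%N,
        gamma = (alpha `|` beta)%fset,
        distortion gamma = condV beta n &
        forall b, b \in beta -> (0 < P (voronoi gamma b))%E].

End CondQuant.

Definition unif01 (R : realType) : {measure set (measurableTypeR R) -> \bar R} := uniform_prob (@ltr01 R).

From HB Require Import structures.
From mathcomp Require Import all_boot all_order all_algebra finmap.
From mathcomp Require Import all_classical all_reals all_analysis.
From mathcomp Require Import measurable_realfun ring lra.
Import Order.TTheory GRing.Theory Num.Theory numFieldNormedType.Exports.
Local Open Scope classical_set_scope.
Local Open Scope ring_scope.

(* Since beta already has two points, the only admissible alpha is empty: beta is the
   unique candidate and V_2 is its distortion.  For a pair a < b the Voronoi boundary is
   the midpoint m, so the distortion of the uniform law on [0,1] is
   int_0^m (x - a)^2 + int_m^1 (x - b)^2 = (a^3 + (b - a)^3 / 4 + (1 - b)^3) / 3,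
   i.e. 37/768 for a = 1/4, b = 1/2; both Voronoi cells contain a nondegenerate
   subinterval of [0,1], hence have positive probability. *)

Section FullConditioning.
Variables (R : realType) (P : {measure set (measurableTypeR R) -> \bar R}).
Variables (beta : {fset R}) (n : nat).
Hypothesis card_beta : #|` beta| = n.

Let no_free_point (alpha : {fset R}) : (#|` alpha| <= n - #|` beta|)%N -> alpha = fset0.
Proof. by rewrite card_beta subnn leqn0 => /eqP/cardfs0_eq. Qed.

Lemma condV_card : condV P beta n = distortion P beta.
Proof.
rewrite /condV -[RHS]ereal_inf1; congr ereal_inf; apply/seteqP; split=> y /=.
- by move=> [alpha /no_free_point -> <-]; rewrite fset0U.
- move=> ->; exists fset0; last by rewrite fset0U.
  by rewrite cardfs0.
Qed.

Lemma cond_optimal_set_card (gamma : {fset R}) :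
  cond_optimal_set P beta n gamma <->
  gamma = beta /\ forall b, b \in beta -> (0 < P (voronoi beta b))%E.
Proof.
split.
- by move=> [_ [alpha [/no_free_point -> -> _ Pvor]]]; rewrite fset0U in Pvor *.
- move=> [-> Pvor]; split; first by rewrite card_beta.
  exists fset0; rewrite cardfs0 fset0U condV_card.
  by split.
Qed.

End FullConditioning.

Lemma big_fset2 (T : choiceType) (V : Type) (idx : V) (op : Monoid.com_law idx)
    (F : T -> V) (a b : T) :
  a != b -> \big[op/idx]_(c <- [fset a; b]%fset) F c = op (F a) (F b).
Proof. by move=> ab; rewrite big_fsetU1 ?inE //= big_seq_fset1. Qed.

Lemma integral_sqr_sub (R : realType) (c a b : R) : a < b ->
  (\int[lebesgue_measure]_(x in `[a, b]) ((x - c) ^+ 2)%:E =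
   (((b - c) ^+ 3 - (a - c) ^+ 3) / 3%:R)%:E)%E.
Proof.
pose F : {poly R} := 3%:R^-1 *: ('X - c%:P) ^+ 3.
have FE y : F.[y] = (y - c) ^+ 3 / 3%:R.
  by rewrite hornerZ horner_exp hornerXsubC mulrC.
have F'E : horner F^`() = (fun y => (y - c) ^+ 2).
  apply/funext => y; rewrite derivZ deriv_exp derivXsubC mul1r.
  rewrite hornerZ hornerMn horner_exp hornerXsubC.
  by rewrite mulrC -mulr_natr -mulrA divff ?mulr1 // pnatr_eq0.
move=> ab; rewrite (@continuous_FTC2 _ _ (horner F)) //.
- by rewrite !FE -EFinB mulrBl.
- by apply: continuous_in_subspaceT => x _; rewrite -F'E; apply: continuous_horner.
- split; first by move=> x _; apply: derivable_horner.
  + exact/cvg_at_right_filter/continuous_horner.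
  + exact/cvg_at_left_filter/continuous_horner.
- by move=> x _; rewrite derive1E derive_val F'E.
Qed.

Lemma unif01_itvcc (R : realType) (c d : R) : 0 <= c -> c <= d -> d <= 1 ->
  unif01 R `[c, d]%classic = (d - c)%:E.
Proof.
move=> c0 cd d1; rewrite /unif01 /= /uniform_prob integral_uniform_pdf setIidl; last first.
  by apply: subset_itv; rewrite bnd_simp.
rewrite (eq_integral (fun=> 1%:E)); last first.
  move=> x; rewrite inE /= in_itv /= => /andP[cx xd].
  by rewrite /uniform_pdf ifT ?subr0 ?invr1 //; apply/andP; split; lra.
rewrite integral_cst //= mul1e lebesgue_measure_itv /= lte_fin.
case: ltP => [_ | dc]; first by rewrite -EFinD.
have -> : d = c by apply/le_anti/andP.
by rewrite subrr.
Qed.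

Lemma ler_norm_sqr (R : realDomainType) (u v : R) :
  (`|u| <= `|v|) = (u ^+ 2 <= v ^+ 2).
Proof. by rewrite -ler_sqr ?nnegrE // !real_normK ?num_real. Qed.

Section TwoPoints.
Variables (R : realType) (a b : R).
Hypothesis ab : a < b.

Lemma sqr_sub_le_l (x : R) : ((x - a) ^+ 2 <= (x - b) ^+ 2) = (x <= (a + b) / 2).
Proof.
rewrite -subr_ge0 (_ : _ - _ = (b - a) * (a + b - 2 * x)); last by ring.
by rewrite pmulr_rge0 ?subr_gt0 //; apply/idP/idP; lra.
Qed.

Lemma sqr_sub_le_r (x : R) : ((x - b) ^+ 2 <= (x - a) ^+ 2) = ((a + b) / 2 <= x).
Proof.
rewrite -subr_ge0 (_ : _ - _ = (b - a) * (2 * x - a - b)); last by ring.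
by rewrite pmulr_rge0 ?subr_gt0 //; apply/idP/idP; lra.
Qed.

Lemma min_sqr_sub_l (x : R) : x <= (a + b) / 2 ->
  Num.min ((x - a) ^+ 2) ((x - b) ^+ 2) = (x - a) ^+ 2.
Proof. by rewrite -sqr_sub_le_l => /min_idPl. Qed.

Lemma min_sqr_sub_r (x : R) : (a + b) / 2 <= x ->
  Num.min ((x - a) ^+ 2) ((x - b) ^+ 2) = (x - b) ^+ 2.
Proof. by rewrite -sqr_sub_le_r => /min_idPr. Qed.

Lemma voronoi_pair_l : voronoi [fset a; b]%fset a = `]-oo, (a + b) / 2]%classic.
Proof.
rewrite set_itvNyc; apply/seteqP; split=> x /=.
- by move=> /(_ b); rewrite in_fset2 eqxx orbT ler_norm_sqr sqr_sub_le_l; apply.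
- move=> xm c; rewrite in_fset2 => /orP[]/eqP-> //.
  by rewrite ler_norm_sqr sqr_sub_le_l.
Qed.

Lemma voronoi_pair_r : voronoi [fset a; b]%fset b = `[(a + b) / 2, +oo[%classic.
Proof.
rewrite set_itvcy; apply/seteqP; split=> x /=.
- by move=> /(_ a); rewrite in_fset2 eqxx ler_norm_sqr sqr_sub_le_r; apply.
- move=> mx c; rewrite in_fset2 => /orP[]/eqP-> //.
  by rewrite ler_norm_sqr sqr_sub_le_r.
Qed.

End TwoPoints.

Section UniformPair.
Variables (R : realType) (a b : R).
Hypotheses (ab : a < b) (mid_gt0 : 0 < (a + b) / 2) (mid_lt1 : (a + b) / 2 < 1).
Let mid_ge0 : 0 <= (a + b) / 2 := ltW mid_gt0.
Let mid_le1 : (a + b) / 2 <= 1 := ltW mid_lt1.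

Lemma unif01_voronoi_pair_gt0 (c : R) : c \in [fset a; b]%fset ->
  (0 < unif01 R (voronoi [fset a; b]%fset c))%E.
Proof.
rewrite in_fset2 => /orP[]/eqP->.
- rewrite voronoi_pair_l //; apply: (@lt_le_trans _ _ (unif01 R `[0, (a + b) / 2]%classic)).
    by rewrite unif01_itvcc // lte_fin subr0.
  by rewrite le_measure ?inE //=; apply: subset_itv; rewrite bnd_simp.
- rewrite voronoi_pair_r //; apply: (@lt_le_trans _ _ (unif01 R `[(a + b) / 2, 1]%classic)).
    by rewrite unif01_itvcc // lte_fin subr_gt0.
  by rewrite le_measure ?inE //=; apply: subset_itv; rewrite bnd_simp.
Qed.

Lemma distortion_unif01_pair : distortion (unif01 R) [fset a; b]%fset =
  ((a ^+ 3 + (b - a) ^+ 3 / 4%:R + (1 - b) ^+ 3) / 3%:R)%:E.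
Proof.
pose g x := Num.min ((x - a) ^+ 2) ((x - b) ^+ 2).
have g_ge0 x : 0 <= g x by rewrite le_min !sqr_ge0.
have mg : measurable_fun setT g.
  by apply: measurable_minr; apply: measurable_funX; apply: measurable_funB.
rewrite /distortion.
under eq_integral => x _ do rewrite big_fset2 ?lt_eqF //= -EFin_min -/(g x).
rewrite integral_uniform; [|exact/measurable_EFinP|by move=> x; rewrite lee_fin].
rewrite subr0 invr1 mul1e.
rewrite (@itv_bndbnd_setU _ _ _ (BRight ((a + b) / 2))) ?bnd_simp //.
rewrite ge0_integral_setU //=; last 3 first.
- exact/measurable_EFinP/measurable_funTS.
- by move=> x _; rewrite lee_fin.
- rewrite disj_set2E; apply/eqP/seteqP; split=> x //=.
  by rewrite !in_itv /= => -[/andP[_ ?] /andP[? _]]; lra.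
rewrite integral_itv_obnd_cbnd; last exact/measurable_EFinP/measurable_funTS.
under eq_integral => x.
  rewrite inE /= in_itv /= => /andP[_ xm]; rewrite /g min_sqr_sub_l //.
  over.
under [X in (_ + X)%E]eq_integral => x.
  rewrite inE /= in_itv /= => /andP[mx _]; rewrite /g min_sqr_sub_r //.
  over.
rewrite !integral_sqr_sub // -EFinD; congr EFin.
by field.
Qed.

End UniformPair.

Theorem proposition3p1 (R : realType) :
  let P := @unif01 R in
  let beta : {fset R} := [fset (4%:R)^-1; (2%:R)^-1]%fset in
  (forall gamma : {fset R}, cond_optimal_set P beta 2 gamma <-> gamma = beta) /\
  condV P beta 2 = ((37%:R / 768%:R : R)%:E).
Proof.
move=> P beta; rewrite {}/P {}/beta.
have quarter_lt_half : (4%:R^-1 : R) < 2%:R^-1 by lra.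
have card_beta : #|` [fset (4%:R^-1 : R); 2%:R^-1]%fset| = 2%N.
  by rewrite cardfs2 lt_eqF.
have mid_gt0 : 0 < (4%:R^-1 + 2%:R^-1) / 2 :> R by lra.
have mid_lt1 : (4%:R^-1 + 2%:R^-1) / 2 < 1 :> R by lra.
split.
- move=> gamma; rewrite cond_optimal_set_card //.
  split=> [[] // | ->]; split=> // c.
  exact: unif01_voronoi_pair_gt0.
- rewrite condV_card // distortion_unif01_pair //; congr EFin.
  by field.
Qed.
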